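(* Let $X=(X_0,X_1)$ be an infinite tree of bounded valence in which every vertex has at least three neighbours, let $\Gamma<\operatorname{Aut}(X)$ be a subgroup of automorphisms such that $\Gamma\backslash X_0$ is finite, and let $p:X_0\times X_0\to[0,1]$ be a $\Gamma$-invariant transition kernel making $(X_0,p)$ an irreducible Markov chain, of finite range: there is an integer $k\geq 0$ with $p(x,y)=0$ whenever $d(x,y)>k$. Let $x,y\in X_0$ and suppose that for every integer $M\geq 0$ there exists a $p$-admissible path $(\omega_0,\dots,\omega_n)\in\mathcal{P}h(x,y;\{y\}^\complement)$ with $\max_i d(\omega_i,y)\geq M$. Then the radius of convergence $R_F(x,y)$ of the first-passage generating function $F_z(x,y)$ equals $R$.
   Context: $d$ is the graph distance on $X_0$. A $p$-admissible path is a finite sequence of vertices $(\omega_0,\dots,\omega_n)$ with $p(\omega_{i-1},\omega_i)>0$ for $1\leq i\leq n$; its weight at $z$ is $w_z(\gamma)=z^n\prod_{i=1}^n p(\omega_{i-1},\omega_i)$. $\mathcal{P}h(x,y;\{y\}^\complement)$ denotes the set of $p$-admissible paths $(\omega_0,\dots,\omega_n)$ with $\omega_0=x$, $\omega_n=y$ and $\omega_i\neq y$ for $0<i<n$. The first-passage generating function is $F_z(x,y)=\sum_{\gamma\in\mathcal{P}h(x,y;\{y\}^\complement)}w_z(\gamma)=\sum_{n\geq 0}p^{(n)}(x,y;\{y\}^\complement)z^n$, and $R_F(x,y)$ is its radius of convergence. $R$ is the radius of convergence of the Green function $G_z(x',y')=\sum_{n\geq 0}p^{(n)}(x',y')z^n$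 (where $p^{(n)}$ is the $n$-step transition probability), which by irreducibility does not depend on $x',y'$. *)

From Stdlib Require Import Reals List Arith Lia ClassicalEpsilon.
From Coquelicot Require Import Coquelicot.
Import ListNotations.
Open Scope R_scope.

Set Implicit Arguments.

(** Sum of [f] over a finite set [P] (0 if [P] is not finite).  The value
    does not depend on the chosen duplicate-free enumeration. *)
Definition fsum {T : Type} (P : T -> Prop) (f : T -> R) : R :=
  match excluded_middle_informative
          (exists l : list T, NoDup l /\ forall t, P t <-> In t l) with
  | left H =>
      fold_right (fun t acc => f t + acc) 0
        (proj1_sig (constructive_indefinite_description _ H))
  | right _ => 0
  end.

Fixpoint chain {V : Type} (r : V -> V -> Prop) (g : list V) : Prop :=
  match g with
  | a :: ((b :: _) as t) => r a b /\ chain r t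
  | _ => True
  end.

Fixpoint nonbacktracking {V : Type} (g : list V) : Prop :=
  match g with
  | a :: ((_ :: c :: _) as t) => a <> c /\ nonbacktracking t
  | _ => True
  end.

Definition path_from_to {V : Type} (r : V -> V -> Prop) (g : list V)
  (x y : V) (n : nat) : Prop :=
  length g = S n /\ chain r g /\ nth 0 g x = x /\ nth n g x = y.

Definition is_tree {V : Type} (adj : V -> V -> Prop) : Prop :=
  (forall x y, adj x y -> adj y x) /\
  (forall x, ~ adj x x) /\
  (forall x y, exists g n, path_from_to adj g x y n) /\
  (* no cycles: every non-backtracking walk of positive length
     has distinct endpoints *)
  (forall g x y n, path_from_to adj g x y n -> (0 < n)%nat ->
      nonbacktracking g -> x <> y).

Definition infinite_type (V : Type) : Prop :=
  ~ exists l : list V, forall v, In v l.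

Definition bounded_valence {V : Type} (adj : V -> V -> Prop) : Prop :=
  exists D : nat, forall x, exists l : list V,
    (length l <= D)%nat /\ forall y, adj x y -> In y l.

Definition min_degree_3 {V : Type} (adj : V -> V -> Prop) : Prop :=
  forall x, exists a b c, adj x a /\ adj x b /\ adj x c /\
    a <> b /\ a <> c /\ b <> c.

Definition dist_gt {V : Type} (adj : V -> V -> Prop) (x y : V) (k : nat) : Prop :=
  forall g n, path_from_to adj g x y n -> (k < n)%nat.
Definition dist_ge {V : Type} (adj : V -> V -> Prop) (x y : V) (M : nat) : Prop :=
  forall g n, path_from_to adj g x y n -> (M <= n)%nat.

Definition is_automorphism {V : Type} (adj : V -> V -> Prop) (f : V -> V) : Prop :=
  (exists g : V -> V, (forall v, g (f v) = v) /\ (forall v, f (g v) = v)) /\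
  (forall x y, adj x y <-> adj (f x) (f y)).

Definition is_subgroup_Aut {V : Type} (adj : V -> V -> Prop)
  (Gamma : (V -> V) -> Prop) : Prop :=
  (forall f, Gamma f -> is_automorphism adj f) /\
  Gamma (fun v => v) /\
  (forall f g, Gamma f -> Gamma g -> Gamma (fun v => f (g v))) /\
  (forall f, Gamma f -> exists g, Gamma g /\ forall v, g (f v) = v /\ f (g v) = v).

Definition finite_quotient {V : Type} (Gamma : (V -> V) -> Prop) : Prop :=
  exists l : list V, forall x, exists f v, Gamma f /\ In v l /\ x = f v.

Definition transition_kernel {V : Type} (p : V -> V -> R) : Prop :=
  (forall x y, 0 <= p x y <= 1) /\
  (forall x, fsum (fun y => 0 < p x y) (fun y => p x y) = 1).

(** Product of the transition probabilities along a path
    (the weight w_z(gamma) is z^n times this). *)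
Fixpoint path_prob {V : Type} (p : V -> V -> R) (g : list V) : R :=
  match g with
  | a :: ((b :: _) as t) => p a b * path_prob p t
  | _ => 1
  end.

Definition p_admissible {V : Type} (p : V -> V -> R) (g : list V) : Prop :=
  chain (fun a b => 0 < p a b) g.

Definition pn {V : Type} (p : V -> V -> R) (n : nat) (x y : V) : R :=
  fsum (fun g => path_from_to (fun a b => 0 < p a b) g x y n) (path_prob p).

Definition in_Ph_first {V : Type} (p : V -> V -> R) (x y : V) (g : list V) : Prop :=
  exists n, path_from_to (fun a b => 0 < p a b) g x y n /\
    forall i, (0 < i < n)%nat -> nth i g x <> y.

(** p^(n)(x,y;{y}^c): coefficient of z^n in F_z(x,y). *)
Definition fpn {V : Type} (p : V -> V -> R) (n : nat) (x y : V) : R :=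
  fsum (fun g => in_Ph_first p x y g /\ length g = S n) (path_prob p).

Definition irreducible {V : Type} (p : V -> V -> R) : Prop :=
  forall x y, exists n, 0 < pn p n x y.

From Stdlib Require Import Reals List Arith.
From Coquelicot Require Import Coquelicot.
From Stdlib Require Import Lra Lia Permutation Classical ClassicalEpsilon
  FunctionalExtensionality PropExtensionality.
Import ListNotations.
Open Scope R_scope.

(** Since F_z(x,y) is dominated coefficientwise by G_z(x,y), only R_F <= R needs
    an argument.  Suppose p^(n)(x,y) z^n is unbounded for some z > 0.  Through
    irreducibility every vertex v then carries loops of some length n with gain
    p^(n)(v,v) z^n > 1, and since there are finitely many Gamma-orbits, a single
    bound N on these lengths works for all v.  Take a first-passage path from x to
    y through a vertex w at distance > N k from y and translate the good loop of
    w's orbit representative to w: by finite range these loops stay at distance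
    <= N k from w, so they never meet y.  Inserting m of them into the path keeps
    it a first-passage path and multiplies its weight by a gain > 1 at each
    insertion, so F_z(x,y) is unbounded as well. *)

Definition finite {T : Type} (P : T -> Prop) : Prop :=
  exists L : list T, forall t, P t -> In t L.

Definition sumf {T : Type} (f : T -> R) (l : list T) : R :=
  fold_right (fun t acc => f t + acc) 0 l.

Section FiniteSums.
Context {T : Type}.
Implicit Types (P Q : T -> Prop) (f : T -> R) (l : list T).

Lemma sumf_app f l1 l2 : sumf f (l1 ++ l2) = sumf f l1 + sumf f l2.
Proof. induction l1; simpl; [lra | rewrite IHl1; lra]. Qed.

Lemma sumf_perm f l l' : Permutation l l' -> sumf f l = sumf f l'.
Proof. induction 1; simpl; lra. Qed.

Lemma finite_sub P Q : finite Q -> (forall t, P t -> Q t) -> finite P.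
Proof. intros [L HL] HPQ. exists L. auto. Qed.

Lemma finite_enum P : finite P -> exists l, NoDup l /\ forall t, P t <-> In t l.
Proof.
  intros [L HL]. revert P HL. induction L as [|a L IH]; intros P HL.
  - exists []. split; [constructor|]. intro t; split; [apply HL | intros []].
  - destruct (IH (fun t => P t /\ t <> a)) as [l [Hn Hl]].
    { intros t [Ht Hne]. destruct (HL t Ht); [congruence | auto]. }
    destruct (classic (P a)) as [Pa | nPa].
    + exists (a :: l). split.
      * constructor; auto. intro Hin. apply Hl in Hin. tauto.
      * intro t. split.
        -- intro Ht. destruct (classic (t = a)); [left | right; apply Hl]; auto.
        -- intros [<- | Hin]; auto. apply Hl in Hin; tauto.
    + exists l. split; auto. intro t. rewrite <- Hl.
      split; [intro Ht; split; congruence | tauto].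
Qed.

Lemma fsum_enum P f l : NoDup l -> (forall t, P t <-> In t l) -> fsum P f = sumf f l.
Proof.
  intros Hn Hl. unfold fsum.
  destruct excluded_middle_informative as [H | H].
  - destruct (constructive_indefinite_description _ H) as [l' [Hn' Hl']]. simpl.
    change (sumf f l' = sumf f l). apply sumf_perm, NoDup_Permutation; auto.
    intro t. rewrite <- Hl, Hl'. tauto.
  - exfalso. apply H. exists l. auto.
Qed.

(** [fsum] returns the junk value [0] on infinite sets. *)
Lemma finite_of_fsum_neq0 P f : fsum P f <> 0 -> finite P.
Proof.
  unfold fsum. intro Hne.
  destruct excluded_middle_informative as [H | _]; [clear Hne | tauto].
  destruct H as [l [_ Hl]]. exists l. intro t. apply Hl.
Qed.

Lemma sumf_le_sub f l0 l : NoDup l0 -> incl l0 l ->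
  (forall t, In t l -> 0 <= f t) -> sumf f l0 <= sumf f l.
Proof.
  intros Hn0. revert l. induction Hn0 as [|a l0 Hna Hn IH]; intros l Hinc Hpos.
  - induction l as [|b l IHl]; simpl; [lra|].
    assert (0 <= f b) by (apply Hpos; left; auto).
    assert (0 <= sumf f l) by (apply IHl; [intros ? [] | intros; apply Hpos; right; auto]).
    lra.
  - assert (Ha : In a l) by (apply Hinc; left; auto).
    destruct (in_split _ _ Ha) as [l1 [l2 ->]].
    rewrite (sumf_perm f (l1 ++ a :: l2) (a :: l1 ++ l2))
      by (symmetry; apply Permutation_middle).
    simpl. apply Rplus_le_compat_l, IH.
    + intros t Ht. assert (Ht' : In t (l1 ++ a :: l2)) by (apply Hinc; right; auto).
      apply in_app_or in Ht'. apply in_or_app. destruct Ht' as [? | [<- | ?]]; tauto.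
    + intros t Ht. apply Hpos. apply in_app_or in Ht. apply in_or_app.
      destruct Ht; auto. right; right; auto.
Qed.

Lemma sumf_le_fsum P f l0 : finite P -> (forall t, P t -> 0 <= f t) ->
  NoDup l0 -> (forall t, In t l0 -> P t) -> sumf f l0 <= fsum P f.
Proof.
  intros HF Hpos Hn0 Hl0. destruct (finite_enum P HF) as [l [Hn Hl]].
  rewrite (fsum_enum P f l Hn Hl). apply sumf_le_sub; auto.
  - intros t Ht. apply Hl, Hl0, Ht.
  - intros t Ht. apply Hpos, Hl, Ht.
Qed.

Lemma fsum_nonneg P f : finite P -> (forall t, P t -> 0 <= f t) -> 0 <= fsum P f.
Proof. intros. apply (sumf_le_fsum P f []); auto; [constructor | intros _ []]. Qed.

Lemma le_fsum P f t : finite P -> (forall u, P u -> 0 <= f u) -> P t -> f t <= fsum P f.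
Proof.
  intros. replace (f t) with (sumf f [t]) by (simpl; lra).
  apply sumf_le_fsum; auto; [repeat constructor; auto | intros u [<- | []]; auto].
Qed.

End FiniteSums.

Lemma finite_union {I T : Type} (Q : I -> T -> Prop) (l : list I) :
  (forall i, finite (Q i)) -> finite (fun t => exists i, In i l /\ Q i t).
Proof.
  intros HQ. induction l as [|a l [L HL]].
  - exists []. intros t [i [[] _]].
  - destruct (HQ a) as [La Ha]. exists (La ++ L).
    intros t [i [[<- | Hi] Hq]]; apply in_or_app; [left | right; apply HL]; eauto.
Qed.

Lemma finite_prod {A B : Type} (P1 : A -> Prop) (P2 : B -> Prop) :
  finite P1 -> finite P2 -> finite (fun pr => P1 (fst pr) /\ P2 (snd pr)).
Proof.
  intros [L1 H1] [L2 H2]. exists (list_prod L1 L2). intros [a b] [Ha Hb].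
  apply in_prod_iff; auto.
Qed.

Lemma fsum_le_inj {A B : Type} (P : A -> Prop) (Q : B -> Prop) (h : A -> B)
  (f : A -> R) (g : B -> R) :
  finite P -> finite Q -> (forall b, Q b -> 0 <= g b) ->
  (forall a, P a -> Q (h a)) -> (forall a, P a -> f a <= g (h a)) ->
  (forall a a', P a -> P a' -> h a = h a' -> a = a') ->
  fsum P f <= fsum Q g.
Proof.
  intros HP HQ Hg HPQ Hfg Hinj. destruct (finite_enum P HP) as [l [Hl Hlp]].
  rewrite (fsum_enum P f l Hl Hlp).
  apply Rle_trans with (sumf g (map h l)).
  - assert (Hin : forall a, In a l -> P a) by (intros; apply Hlp; auto).
    clear Hl Hlp. induction l as [|a l IH]; simpl; [lra|].
    apply Rplus_le_compat; [apply Hfg, Hin; left | apply IH; intros; apply Hin; right]; auto.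
  - apply sumf_le_fsum; auto.
    + apply NoDup_map_NoDup_ForallPairs; auto.
      intros a a' Ha Ha'. apply Hinj; apply Hlp; auto.
    + intros b Hb. apply in_map_iff in Hb as [a [<- Ha]]. apply HPQ, Hlp, Ha.
Qed.

Lemma NoDup_list_prod {A B : Type} (l1 : list A) (l2 : list B) :
  NoDup l1 -> NoDup l2 -> NoDup (list_prod l1 l2).
Proof.
  induction 1 as [|a l1 Hna Hn IH]; intros H2; simpl; [constructor|].
  apply NoDup_app; auto.
  - apply NoDup_map_NoDup_ForallPairs; auto. intros b c _ _ E. congruence.
  - intros [u v] H1 H1'. apply in_map_iff in H1 as [c [E _]]. inversion E; subst.
    apply in_prod_iff in H1'. tauto.
Qed.

Lemma sumf_list_prod {A B : Type} (f1 : A -> R) (f2 : B -> R) l1 l2 :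
  sumf (fun pr => f1 (fst pr) * f2 (snd pr)) (list_prod l1 l2) = sumf f1 l1 * sumf f2 l2.
Proof.
  induction l1 as [|a l1 IH]; simpl; [lra|]. rewrite sumf_app, IH.
  enough (E : sumf (fun pr => f1 (fst pr) * f2 (snd pr)) (map (fun b => (a, b)) l2)
              = f1 a * sumf f2 l2) by (rewrite E; lra).
  clear IH. induction l2 as [|b l2 IH2]; simpl; [lra|]. rewrite IH2. lra.
Qed.

Lemma fsum_mul {A B : Type} (P1 : A -> Prop) (P2 : B -> Prop) w1 w2 :
  finite P1 -> finite P2 ->
  fsum P1 w1 * fsum P2 w2
  = fsum (fun pr => P1 (fst pr) /\ P2 (snd pr)) (fun pr => w1 (fst pr) * w2 (snd pr)).
Proof.
  intros H1 H2. destruct (finite_enum P1 H1) as [l1 [Hn1 Hl1]].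
  destruct (finite_enum P2 H2) as [l2 [Hn2 Hl2]].
  rewrite (fsum_enum P1 w1 l1), (fsum_enum P2 w2 l2), <- sumf_list_prod; auto.
  symmetry. apply fsum_enum; [apply NoDup_list_prod; auto|].
  intros [a b]; simpl. rewrite in_prod_iff, Hl1, Hl2. tauto.
Qed.

Section Paths.
Context {V : Type}.
Implicit Types (r s : V -> V -> Prop) (g : list V).

Definition path_nth r g a b n : Prop :=
  length g = S n /\ (forall j d, (j < n)%nat -> r (nth j g d) (nth (S j) g d)) /\
  (forall d, nth 0 g d = a) /\ (forall d, nth n g d = b).

Lemma chain_nth r g :
  chain r g <-> forall j d, (S j < length g)%nat -> r (nth j g d) (nth (S j) g d).
Proof.
  induction g as [|a [|b t] IH]; simpl; try (split; [intros _ j d H; lia | auto]).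
  rewrite IH. split.
  - intros [Hab H] [|j] d Hj; auto. apply H. simpl in *; lia.
  - intros H. split; [apply (H 0%nat a); lia|].
    intros j d Hj. apply (H (S j) d). simpl in *; lia.
Qed.

Lemma path_from_toE r g a b n : path_from_to r g a b n <-> path_nth r g a b n.
Proof.
  unfold path_from_to, path_nth. rewrite chain_nth. split.
  - intros [Hl [Hc [H0 Hn]]]. repeat split; auto.
    + intros j d Hj. apply Hc. lia.
    + intro d. rewrite <- H0. apply nth_indep. lia.
    + intro d. rewrite <- Hn. apply nth_indep. lia.
  - intros [Hl [Hc [H0 Hn]]]. repeat split; auto. intros j d Hj. apply Hc. lia.
Qed.

Lemma path_from_to_nil r a : path_from_to r [a] a a 0.
Proof. repeat split. Qed.

Lemma path_from_to_S r g a b n : path_from_to r g a b (S n) ->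
  exists c t, g = a :: t /\ r a c /\ path_from_to r t c b n.
Proof.
  rewrite path_from_toE. intros [L [St [A0 Bn]]].
  destruct g as [|a' t]; [discriminate|]. specialize (A0 a) as E. simpl in E; subst a'.
  exists (nth 0 t a), t. split; [reflexivity|]. split; [apply (St 0%nat a); lia|].
  apply path_from_toE. split; [|split; [|split]].
  - simpl in L; lia.
  - intros j d Hj. apply (St (S j) d). lia.
  - intro d. apply nth_indep. simpl in L; lia.
  - intro d. apply (Bn d).
Qed.

Lemma path_from_to_map r r' (f : V -> V) g a b n :
  (forall u v, r u v -> r' (f u) (f v)) -> path_from_to r g a b n ->
  path_from_to r' (map f g) (f a) (f b) n.
Proof.
  intros Hf. rewrite !path_from_toE. intros [L [St [A0 Bn]]].
  assert (Hnth : forall j d, (j <= n)%nat -> nth j (map f g) d = f (nth j g a)).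
  { intros j d Hj. rewrite (nth_indep _ d (f a)) by (rewrite length_map; lia).
    apply map_nth. }
  split; [|split; [|split]].
  - rewrite length_map; auto.
  - intros j d Hj. rewrite !Hnth by lia. auto.
  - intro d. rewrite Hnth, A0 by lia. reflexivity.
  - intro d. rewrite Hnth, Bn by lia. reflexivity.
Qed.

Definition path_cat g1 g2 := g1 ++ tl g2.

Lemma nth_path_cat g1 g2 n1 i d : length g1 = S n1 -> g2 <> [] ->
  nth i (path_cat g1 g2) d = if (i <=? n1)%nat then nth i g1 d else nth (i - n1) g2 d.
Proof.
  intros Hl Hg. destruct g2 as [|b t]; [congruence|]. unfold path_cat; simpl tl.
  destruct (Nat.leb_spec i n1).
  - rewrite app_nth1; auto. lia.
  - rewrite app_nth2 by lia. replace (i - n1)%nat with (S (i - S n1)) by lia.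
    simpl. rewrite Hl. reflexivity.
Qed.

Lemma path_from_to_cat r g1 g2 a b c n1 n2 :
  path_from_to r g1 a b n1 -> path_from_to r g2 b c n2 ->
  path_from_to r (path_cat g1 g2) a c (n1 + n2).
Proof.
  rewrite !path_from_toE. intros [L1 [S1 [A1 B1]]] [L2 [S2 [A2 B2]]].
  assert (Hg2 : g2 <> []) by (intros ->; discriminate).
  pose proof (fun i d => nth_path_cat g1 g2 n1 i d L1 Hg2) as CN.
  split; [|split; [|split]].
  - unfold path_cat. rewrite length_app. destruct g2; [congruence|]. simpl in *. lia.
  - intros j d Hj. rewrite !CN.
    destruct (Nat.leb_spec j n1), (Nat.leb_spec (S j) n1); try lia.
    + apply S1. lia.
    + assert (j = n1) by lia. subst j. rewrite B1, <- (A2 d).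
      replace (S n1 - n1)%nat with 1%nat by lia. apply S2. lia.
    + replace (S j - n1)%nat with (S (j - n1)) by lia. apply S2. lia.
  - intro d. rewrite CN. apply A1.
  - intro d. rewrite CN. destruct (Nat.leb_spec (n1 + n2) n1).
    + replace n2 with 0%nat in * by lia. rewrite Nat.add_0_r, B1, <- (A2 d), B2. auto.
    + replace (n1 + n2 - n1)%nat with n2 by lia. apply B2.
Qed.

Lemma path_cat_inj r g1 g1' g2 g2' a b c n1 n2 :
  path_from_to r g1 a b n1 -> path_from_to r g1' a b n1 ->
  path_from_to r g2 b c n2 -> path_from_to r g2' b c n2 ->
  path_cat g1 g2 = path_cat g1' g2' -> g1 = g1' /\ g2 = g2'.
Proof.
  rewrite !path_from_toE. intros [L1 _] [L1' _] [L2 [_ [A2 _]]] [L2' [_ [A2' _]]] E.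
  assert (Eg1 : g1 = g1' /\ tl g2 = tl g2').
  { destruct (app_eq_app _ _ _ _ E) as [l [[-> E2] | [-> E2]]];
      rewrite length_app in *; destruct l; simpl in *; try lia;
      rewrite app_nil_r; auto. }
  destruct Eg1 as [-> Et]. split; auto.
  destruct g2 as [|u t], g2' as [|u' t']; try discriminate.
  specialize (A2 b). specialize (A2' b). simpl in *. congruence.
Qed.

Lemma path_from_to_firstn r g a b n i : path_from_to r g a b n -> (i <= n)%nat ->
  path_from_to r (firstn (S i) g) a (nth i g a) i.
Proof.
  rewrite !path_from_toE. intros [L [St [A0 Bn]]] Hi.
  assert (E : forall j d, (j <= i)%nat -> nth j (firstn (S i) g) d = nth j g d).
  { intros j d Hj. rewrite nth_firstn. destruct (Nat.ltb_spec j (S i)); [reflexivity | lia]. }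
  split; [|split; [|split]].
  - rewrite length_firstn. lia.
  - intros j d Hj. rewrite !E by lia. apply St. lia.
  - intro d. rewrite E by lia. apply A0.
  - intro d. rewrite E by lia. apply nth_indep. lia.
Qed.

Lemma path_from_to_skipn r g a b n i : path_from_to r g a b n -> (i <= n)%nat ->
  path_from_to r (skipn i g) (nth i g a) b (n - i).
Proof.
  rewrite !path_from_toE. intros [L [St [A0 Bn]]] Hi.
  split; [|split; [|split]]; intros; rewrite ?length_skipn, ?nth_skipn.
  - lia.
  - replace (i + S j)%nat with (S (i + j)) by lia. apply St. lia.
  - rewrite Nat.add_0_r. apply nth_indep. lia.
  - replace (i + (n - i))%nat with n by lia. apply Bn.
Qed.

Definition within r (m : nat) (a b : V) : Prop :=
  exists g n, (n <= m)%nat /\ path_from_to r g a b n.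

Lemma within_refl r a : within r 0 a a.
Proof. exists [a], 0%nat. split; [lia | apply path_from_to_nil]. Qed.

Lemma within_mono r m m' a b : within r m a b -> (m <= m')%nat -> within r m' a b.
Proof. intros [g [n [Hn Hg]]] Hm. exists g, n. split; [lia | exact Hg]. Qed.

Lemma within_trans r m1 m2 a b c :
  within r m1 a b -> within r m2 b c -> within r (m1 + m2) a c.
Proof.
  intros [g1 [n1 [H1 P1]]] [g2 [n2 [H2 P2]]].
  exists (path_cat g1 g2), (n1 + n2)%nat. split; [lia | eapply path_from_to_cat; eauto].
Qed.

Lemma path_from_to_within r s k g a b n :
  (forall u v, r u v -> within s k u v) -> path_from_to r g a b n ->
  forall j, (j <= n)%nat -> within s (j * k) a (nth j g a).
Proof.
  intros Hrs Hg. apply path_from_toE in Hg as [L [St [A0 Bn]]].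
  induction j as [|j IH]; intro Hj.
  - rewrite A0. apply within_refl.
  - replace (S j * k)%nat with (j * k + k)%nat by lia.
    eapply within_trans; [apply IH; lia | apply Hrs, St; lia].
Qed.

Lemma dist_ge_not_within r a b m : dist_ge r a b (S m) -> ~ within r m a b.
Proof. intros Hd [g [n [Hn Hg]]]. apply Hd in Hg. lia. Qed.

End Paths.

Lemma within_of_finite_range {V : Type} (adj : V -> V -> Prop) (p : V -> V -> R) k a b :
  (forall u v, dist_gt adj u v k -> p u v = 0) -> 0 < p a b -> within adj k a b.
Proof.
  intros Hk Hab. apply NNPP. intro Hn.
  assert (Hd : dist_gt adj a b k).
  { intros g n Hg. destruct (Nat.le_gt_cases n k); auto. exfalso. apply Hn. exists g, n. auto. }
  rewrite (Hk a b Hd) in Hab. lra.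
Qed.

Section PathWeights.
Context {V : Type} (p : V -> V -> R).
Hypothesis p_nonneg : forall a b, 0 <= p a b.
Hypothesis rows_finite : forall a, finite (fun b => 0 < p a b).
Local Notation step := (fun a b : V => 0 < p a b).
Implicit Types (g : list V).

Lemma path_prob_nonneg g : 0 <= path_prob p g.
Proof.
  induction g as [|a [|b t] IH]; simpl in *; try lra. apply Rmult_le_pos; auto.
Qed.

Lemma path_prob_pos g : p_admissible p g -> 0 < path_prob p g.
Proof.
  unfold p_admissible. induction g as [|a [|b t] IH]; simpl in *; try lra.
  intros [H1 H2]. apply Rmult_lt_0_compat; auto.
Qed.

Lemma path_prob_app g b t : g <> [] -> nth (pred (length g)) g b = b ->
  path_prob p (g ++ t) = path_prob p g * path_prob p (b :: t).
Proof.
  induction g as [|a [|c s] IH]; intros Hg Hn; [congruence | simpl in *; subst; lra |].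
  change (p a c * path_prob p ((c :: s) ++ t) = p a c * path_prob p (c :: s) * path_prob p (b :: t)).
  rewrite IH; [lra | congruence | exact Hn].
Qed.

Lemma path_prob_cat (r : V -> V -> Prop) g1 g2 a b c n1 n2 :
  path_from_to r g1 a b n1 -> path_from_to r g2 b c n2 ->
  path_prob p (path_cat g1 g2) = path_prob p g1 * path_prob p g2.
Proof.
  rewrite !path_from_toE. intros [L1 [_ [_ B1]]] [L2 [_ [A2 _]]].
  destruct g2 as [|u t]; [discriminate|]. specialize (A2 b). simpl in A2. subst u.
  apply path_prob_app; [intros ->; discriminate | rewrite L1; apply B1].
Qed.

Lemma path_prob_map (f : V -> V) g : (forall a b, p (f a) (f b) = p a b) ->
  path_prob p (map f g) = path_prob p g.
Proof.
  intros Hf. induction g as [|a [|b t] IH]; simpl in *; auto. rewrite Hf, IH. reflexivity.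
Qed.

Definition taboo_path (y a b : V) (n : nat) g : Prop :=
  path_from_to step g a b n /\ forall i, (0 < i < n)%nat -> nth i g a <> y.

Definition taboo_pn (y : V) (n : nat) (a b : V) : R :=
  fsum (taboo_path y a b n) (path_prob p).

Lemma fpn_taboo_pn n x y : fpn p n x y = taboo_pn y n x y.
Proof.
  unfold fpn, taboo_pn. f_equal. apply functional_extensionality. intro g.
  apply propositional_extensionality. unfold in_Ph_first, taboo_path. split.
  - intros [[m [Hg Hi]] Hl]. destruct Hg as [Lg Hg'].
    assert (m = n) by (rewrite Lg in Hl; lia). subst. split; auto. split; auto.
  - intros [Hg Hi]. split; [exists n; split; auto | apply Hg].
Qed.

Lemma finite_paths_from a n : finite (fun g => exists b, path_from_to step g a b n).
Proof.
  revert a. induction n as [|n IH]; intro a.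
  - exists [[a]]. intros g [b Hg]. apply path_from_toE in Hg as [L [_ [A0 _]]].
    destruct g as [|u [|]]; try discriminate. specialize (A0 a). simpl in A0. subst.
    left; reflexivity.
  - destruct (rows_finite a) as [La HLa].
    destruct (finite_union (fun c t => exists b, path_from_to step t c b n) La IH) as [L HL].
    exists (map (cons a) L). intros g [b Hg].
    apply path_from_to_S in Hg as [c [t [-> [Hac Ht]]]].
    apply in_map, HL. exists c. split; [apply HLa; auto | eauto].
Qed.

Lemma finite_paths a b n : finite (fun g => path_from_to step g a b n).
Proof. apply (finite_sub _ _ (finite_paths_from a n)). eauto. Qed.

Lemma finite_taboo_paths y a b n : finite (taboo_path y a b n).
Proof. apply (finite_sub _ _ (finite_paths a b n)). intros g []; auto. Qed.

Lemma pn_nonneg n a b : 0 <= pn p n a b.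
Proof. apply fsum_nonneg; [apply finite_paths | intros; apply path_prob_nonneg]. Qed.

Lemma taboo_pn_nonneg y n a b : 0 <= taboo_pn y n a b.
Proof. apply fsum_nonneg; [apply finite_taboo_paths | intros; apply path_prob_nonneg]. Qed.

Lemma taboo_pn_le_pn y n a b : taboo_pn y n a b <= pn p n a b.
Proof.
  unfold taboo_pn, pn. apply (fsum_le_inj _ _ (fun g : list V => g)); [apply finite_taboo_paths | apply finite_paths | | | |].
  - intros; apply path_prob_nonneg.
  - intros g []; auto.
  - intros; apply Rle_refl.
  - auto.
Qed.

Lemma taboo_pn_pos y a b n g : taboo_path y a b n g -> 0 < taboo_pn y n a b.
Proof.
  intros Hg. apply Rlt_le_trans with (path_prob p g).
  - apply path_prob_pos. apply Hg.
  - apply le_fsum; auto; [apply finite_taboo_paths | intros; apply path_prob_nonneg].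
Qed.

Lemma fsum_path_cat_le (P1 P2 P3 : list V -> Prop) a b c n1 n2 :
  (forall g, P1 g -> path_from_to step g a b n1) ->
  (forall g, P2 g -> path_from_to step g b c n2) ->
  (forall g1 g2, P1 g1 -> P2 g2 -> P3 (path_cat g1 g2)) -> finite P3 ->
  fsum P1 (path_prob p) * fsum P2 (path_prob p) <= fsum P3 (path_prob p).
Proof.
  intros H1 H2 H12 F3.
  assert (F1 : finite P1) by (eapply finite_sub; [apply (finite_paths a b n1) | auto]).
  assert (F2 : finite P2) by (eapply finite_sub; [apply (finite_paths b c n2) | auto]).
  rewrite fsum_mul by auto.
  apply (fsum_le_inj _ _ (fun pr => path_cat (fst pr) (snd pr)));
    [apply finite_prod; auto | auto | intros; apply path_prob_nonneg | | |].
  - intros [g1 g2] [G1 G2]. auto.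
  - intros [g1 g2] [G1 G2]. simpl. apply Req_le. symmetry.
    eapply path_prob_cat; [apply H1 | apply H2]; eauto.
  - intros [g1 g2] [g1' g2'] [G1 G2] [G1' G2'] E. simpl in *.
    destruct (path_cat_inj step g1 g1' g2 g2' a b c n1 n2) as [-> ->]; auto.
Qed.

Lemma pn_mul_le n1 n2 a b c : pn p n1 a b * pn p n2 b c <= pn p (n1 + n2) a c.
Proof.
  apply (fsum_path_cat_le _ _ _ a b c n1 n2); auto; [|apply finite_paths].
  intros; eapply path_from_to_cat; eauto.
Qed.

Lemma taboo_path_cat y a b c n1 n2 g1 g2 : b <> y ->
  taboo_path y a b n1 g1 -> taboo_path y b c n2 g2 ->
  taboo_path y a c (n1 + n2) (path_cat g1 g2).
Proof.
  intros Hb [P1 I1] [P2 I2]. split; [eapply path_from_to_cat; eauto|].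
  apply path_from_toE in P1 as [L1 [_ [_ B1]]], P2 as [L2 _].
  assert (Hg2 : g2 <> []) by (intros ->; discriminate).
  intros i Hi. rewrite (nth_path_cat g1 g2 n1 i a L1 Hg2).
  destruct (Nat.leb_spec i n1), (Nat.eq_dec i n1) as [-> | Hne]; try lia.
  - rewrite B1. auto.
  - apply I1. lia.
  - rewrite (nth_indep g2 a b) by lia. apply I2. lia.
Qed.

Lemma taboo_pn_mul_le y n1 n2 a b c : b <> y ->
  taboo_pn y n1 a b * taboo_pn y n2 b c <= taboo_pn y (n1 + n2) a c.
Proof.
  intros Hb. apply (fsum_path_cat_le _ _ _ a b c n1 n2);
    [intros g []; auto | intros g []; auto | | apply finite_taboo_paths].
  intros g1 g2 H1 H2. apply (taboo_path_cat y a b c n1 n2); auto.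
Qed.

Lemma taboo_pn_pow y w n m : w <> y -> taboo_pn y n w w ^ m <= taboo_pn y (m * n) w w.
Proof.
  intros Hw. induction m as [|m IH]; simpl pow.
  - change 1 with (path_prob p [w]). apply le_fsum;
      [apply finite_taboo_paths | intros; apply path_prob_nonneg |].
    split; [apply path_from_to_nil | intros; lia].
  - eapply Rle_trans; [|apply (taboo_pn_mul_le y n (m * n) w w w Hw)].
    apply Rmult_le_compat_l; [apply taboo_pn_nonneg | exact IH].
Qed.

Lemma taboo_path_split y a b n g i : taboo_path y a b n g -> (i <= n)%nat ->
  taboo_path y a (nth i g a) i (firstn (S i) g) /\
  taboo_path y (nth i g a) b (n - i) (skipn i g).
Proof.
  intros [Hg Hint] Hi. pose proof Hg as [Lg _]. split; split.
  - apply (path_from_to_firstn _ _ _ b n); auto.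
  - intros j Hj. rewrite nth_firstn. destruct (Nat.ltb_spec j (S i)); [|lia]. apply Hint. lia.
  - apply (path_from_to_skipn _ _ _ _ _ _ Hg Hi).
  - intros j Hj. rewrite nth_skipn, (nth_indep g _ a) by lia. apply Hint. lia.
Qed.

Lemma pn_le_taboo_pn_image (adj : V -> V -> Prop) k (f f' : V -> V) v y n :
  (forall u, f' (f u) = u) -> (forall a b, p (f a) (f b) = p a b) ->
  (forall a b, 0 < p a b -> within adj k a b) -> ~ within adj (n * k) (f v) y ->
  pn p n v v <= taboo_pn y n (f v) (f v).
Proof.
  intros Hf'f Hpf Hrange Hfar. unfold taboo_pn, pn.
  apply (fsum_le_inj _ _ (map f));
    [apply finite_paths | apply finite_taboo_paths | intros; apply path_prob_nonneg | | |].
  - intros g Hg.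
    assert (Hfg : path_from_to step (map f g) (f v) (f v) n).
    { apply path_from_to_map with (r := step); auto. intros u u'. rewrite Hpf. auto. }
    split; [exact Hfg|]. intros i Hi E. apply Hfar. rewrite <- E.
    apply (within_mono _ (i * k)); [apply (path_from_to_within _ _ _ _ _ _ _ Hrange Hfg); lia|].
    apply Nat.mul_le_mono_r. lia.
  - intros g _. rewrite path_prob_map; auto. apply Rle_refl.
  - intros g g' _ _ E. apply (f_equal (map f')) in E. rewrite !map_map in E.
    rewrite !(map_ext (fun u => f' (f u)) (fun u => u)), !map_id in E; auto.
Qed.

End PathWeights.

Lemma bounded_witnesses {A : Type} (P : A -> nat -> Prop) (l : list A) :
  (forall a, exists n, P a n) -> exists N, forall a, In a l -> exists n, (n <= N)%nat /\ P a n.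
Proof.
  intros HP. induction l as [|a l [N HN]]; [exists 0%nat; intros ? [] |].
  destruct (HP a) as [na Ha]. exists (Nat.max na N). intros b [<- | Hb].
  - exists na. split; [lia | exact Ha].
  - destruct (HN b Hb) as [n [Hn Hq]]. exists n. split; [lia | exact Hq].
Qed.

Section Growth.
Context {V : Type} (p : V -> V -> R).
Hypothesis p_nonneg : forall a b, 0 <= p a b.
Hypothesis rows_finite : forall a, finite (fun b => 0 < p a b).
Variable z : R.
Hypothesis z_pos : 0 < z.

Lemma pn_loop_gain x y : irreducible p ->
  (forall C, exists n, C < pn p n x y * z ^ n) ->
  forall v, exists n, 1 < pn p n v v * z ^ n.
Proof.
  intros Hirr Hunb v.
  destruct (Hirr v x) as [a0 Ha0], (Hirr y v) as [b0 Hb0].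
  set (c := pn p a0 v x * z ^ a0 * (pn p b0 y v * z ^ b0)).
  assert (Hc : 0 < c) by (unfold c; pose proof (pow_lt z a0 z_pos);
    pose proof (pow_lt z b0 z_pos); apply Rmult_lt_0_compat; apply Rmult_lt_0_compat; auto).
  destruct (Hunb (/ c)) as [N HN]. exists (a0 + N + b0)%nat.
  assert (Hpath : pn p a0 v x * pn p N x y * pn p b0 y v <= pn p (a0 + N + b0) v v).
  { eapply Rle_trans; [|apply pn_mul_le; auto].
    apply Rmult_le_compat_r; [apply pn_nonneg; auto | apply pn_mul_le; auto]. }
  apply Rlt_le_trans with (c * (pn p N x y * z ^ N)).
  - apply (Rmult_lt_compat_l c) in HN; auto. rewrite Rinv_r in HN; lra.
  - rewrite !pow_add.
    replace (c * (pn p N x y * z ^ N))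
      with (pn p a0 v x * pn p N x y * pn p b0 y v * (z ^ a0 * z ^ N * z ^ b0))
      by (unfold c; ring).
    apply Rmult_le_compat_r; [|exact Hpath].
    pose proof (pow_lt z a0 z_pos); pose proof (pow_lt z N z_pos);
      pose proof (pow_lt z b0 z_pos).
    apply Rmult_le_pos; [apply Rmult_le_pos|]; lra.
Qed.

(** Insert [m] copies of a y-avoiding loop at [w] of gain [> 1] into a
    first-passage path through [w]. *)
Lemma taboo_pn_unbounded x y w i j n : w <> y ->
  0 < taboo_pn p y i x w -> 0 < taboo_pn p y j w y -> 1 < taboo_pn p y n w w * z ^ n ->
  forall C, exists L, C < taboo_pn p y L x y * z ^ L.
Proof.
  intros Hw Hi Hj Hq C.
  set (c := taboo_pn p y i x w * z ^ i * (taboo_pn p y j w y * z ^ j)).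
  set (q := taboo_pn p y n w w * z ^ n) in *.
  assert (Hc : 0 < c) by (unfold c; pose proof (pow_lt z i z_pos);
    pose proof (pow_lt z j z_pos); apply Rmult_lt_0_compat; apply Rmult_lt_0_compat; auto).
  assert (Hq' : Rabs q > 1) by (rewrite Rabs_pos_eq; lra).
  destruct (Pow_x_infinity q Hq' (C / c + 1)) as [m Hm].
  specialize (Hm m (le_n m)). rewrite Rabs_pos_eq in Hm by (apply pow_le; lra).
  exists (i + m * n + j)%nat.
  assert (Hpath : taboo_pn p y i x w * taboo_pn p y n w w ^ m * taboo_pn p y j w y
                  <= taboo_pn p y (i + m * n + j) x y).
  { eapply Rle_trans; [|apply taboo_pn_mul_le with (b := w); auto].
    apply Rmult_le_compat_r; [apply taboo_pn_nonneg; auto|].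
    eapply Rle_trans; [|apply taboo_pn_mul_le with (b := w); auto].
    apply Rmult_le_compat_l; [lra | apply taboo_pn_pow; auto]. }
  apply Rlt_le_trans with (c * q ^ m).
  - apply Rlt_le_trans with (c * (C / c + 1)); [|apply Rmult_le_compat_l; lra].
    replace (c * (C / c + 1)) with (C + c) by (field; lra). lra.
  - replace (z ^ (i + m * n + j)) with (z ^ i * (z ^ n) ^ m * z ^ j)
      by (rewrite !pow_add, Nat.mul_comm, pow_mult; ring).
    unfold c, q. rewrite Rpow_mult_distr.
    replace (taboo_pn p y i x w * z ^ i * (taboo_pn p y j w y * z ^ j) *
             (taboo_pn p y n w w ^ m * (z ^ n) ^ m))
      with (taboo_pn p y i x w * taboo_pn p y n w w ^ m * taboo_pn p y j w y *
            (z ^ i * (z ^ n) ^ m * z ^ j)) by ring.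
    apply Rmult_le_compat_r; [|exact Hpath].
    pose proof (pow_lt z i z_pos); pose proof (pow_lt (z ^ n) m (pow_lt z n z_pos));
      pose proof (pow_lt z j z_pos).
    apply Rmult_le_pos; [apply Rmult_le_pos|]; lra.
Qed.

End Growth.

Lemma CV_radius_le_of_bounded (a b : nat -> R) :
  (forall z, 0 < z -> (exists M, forall n, Rabs (a n * z ^ n) <= M) ->
     exists M, forall n, Rabs (b n * z ^ n) <= M) ->
  Rbar_le (CV_radius a) (CV_radius b).
Proof.
  intros Hab. destruct (CV_radius_bounded a) as [_ Hlub]. apply Hlub.
  intros z Hz. destruct (Rle_lt_dec z 0) as [Hz0 | Hz0].
  - apply Rbar_le_trans with (Finite 0); [simpl; lra | apply CV_radius_ge_0].
  - apply (CV_radius_bounded b). auto.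
Qed.

Lemma CV_radius_le_of_unbounded (a b : nat -> R) : (forall n, 0 <= b n) ->
  (forall z, 0 < z -> (forall C, exists n, C < b n * z ^ n) ->
     forall C, exists n, C < a n * z ^ n) ->
  Rbar_le (CV_radius a) (CV_radius b).
Proof.
  intros Hb Hab. apply CV_radius_le_of_bounded. intros z Hz [M HM].
  apply NNPP. intros Hnb. destruct (Hab z Hz) with M as [n Hn].
  - intro C. apply NNPP. intro HC. apply Hnb. exists C. intro n.
    rewrite Rabs_pos_eq by (apply Rmult_le_pos; [apply Hb | apply pow_le; lra]).
    apply Rnot_lt_le. intro Hn. apply HC. eauto.
  - specialize (HM n). pose proof (Rle_abs (a n * z ^ n)). lra.
Qed.

Lemma fpn_unbounded {V : Type} (adj : V -> V -> Prop) (Gamma : (V -> V) -> Prop)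
  (p : V -> V -> R) (k : nat) (x y : V) (z : R) :
  (forall a b, 0 <= p a b) -> (forall a, finite (fun b => 0 < p a b)) ->
  is_subgroup_Aut adj Gamma -> finite_quotient Gamma ->
  (forall f a b, Gamma f -> p (f a) (f b) = p a b) ->
  irreducible p ->
  (forall a b, dist_gt adj a b k -> p a b = 0) ->
  (forall M : nat, exists g, in_Ph_first p x y g /\
      exists i, (i < length g)%nat /\ dist_ge adj (nth i g x) y M) ->
  0 < z -> (forall C, exists n, C < pn p n x y * z ^ n) ->
  forall C, exists L, C < fpn p L x y * z ^ L.
Proof.
  intros Hp0 Hrows [HGaut _] [reps Hreps] Hinv Hirr Hk Hfar Hz Hunb C.
  destruct (bounded_witnesses _ reps (pn_loop_gain p Hp0 Hrows z Hz x y Hirr Hunb))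
    as [N HN].
  destruct (Hfar (S (N * k))) as [g [[nn [Hg Hint]] [i [Hi Hd]]]].
  set (w := nth i g x) in *.
  assert (Hw : ~ within adj (N * k) w y) by (apply dist_ge_not_within, Hd).
  assert (Hwy : w <> y) by (intros E; apply Hw; rewrite E;
    apply (within_mono _ 0); [apply within_refl | lia]).
  assert (Hinn : (i <= nn)%nat) by (destruct Hg as [Lg _]; lia).
  destruct (taboo_path_split p y x y nn g i (conj Hg Hint) Hinn) as [Hxw Hwy'].
  destruct (Hreps w) as [f [v [Hf [Hv Ew]]]].
  destruct (HN v Hv) as [n [HnN Hgain]].
  destruct (HGaut f Hf) as [[f' [Hf'f _]] _].
  assert (Hloop : pn p n v v <= taboo_pn p y n w w).
  { rewrite Ew. apply (pn_le_taboo_pn_image p Hp0 Hrows adj k f f'); auto.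
    - intros a b. apply within_of_finite_range, Hk.
    - rewrite <- Ew. intro Hnk. apply Hw.
      apply (within_mono _ _ _ _ _ Hnk), Nat.mul_le_mono_r, HnN. }
  destruct (taboo_pn_unbounded p Hp0 Hrows z Hz x y w i (nn - i) n Hwy
              (taboo_pn_pos p Hp0 Hrows _ _ _ _ _ Hxw)
              (taboo_pn_pos p Hp0 Hrows _ _ _ _ _ Hwy')) with C as [L HL].
  - pose proof (pow_lt z n Hz). apply Rlt_le_trans with (pn p n v v * z ^ n); [exact Hgain|].
    apply Rmult_le_compat_r; lra.
  - exists L. rewrite fpn_taboo_pn. exact HL.
Qed.

Theorem proposition3p8
  (V : Type) (adj : V -> V -> Prop) (Gamma : (V -> V) -> Prop)
  (p : V -> V -> R) (k : nat) (x y : V) :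
  is_tree adj ->
  infinite_type V ->
  bounded_valence adj ->
  min_degree_3 adj ->
  is_subgroup_Aut adj Gamma ->
  finite_quotient Gamma ->
  transition_kernel p ->
  (forall f a b, Gamma f -> p (f a) (f b) = p a b) ->
  irreducible p ->
  (forall a b, dist_gt adj a b k -> p a b = 0) ->
  (forall M : nat, exists g, in_Ph_first p x y g /\
      exists i, (i < length g)%nat /\ dist_ge adj (nth i g x) y M) ->
  CV_radius (fun n => fpn p n x y) = CV_radius (fun n => pn p n x y).
Proof.
  intros _ _ _ _ HG HQ [Hp01 Hrows] Hinv Hirr Hk Hfar.
  assert (Hp0 : forall a b, 0 <= p a b) by (intros; apply Hp01).
  assert (Hfin : forall a, finite (fun b => 0 < p a b)).
  { intro a. apply (finite_of_fsum_neq0 _ (p a)). rewrite Hrows. lra. }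
  apply Rbar_le_antisym.
  - apply CV_radius_le_of_unbounded; [intro; apply pn_nonneg; auto|].
    intros z Hz Hunb. eapply fpn_unbounded; eauto.
  - apply CV_radius_le_of_bounded. intros z _ [M HM]. exists M. intro n.
    eapply Rle_trans; [|apply (HM n)]. rewrite !Rabs_mult.
    apply Rmult_le_compat_r; [apply Rabs_pos|].
    rewrite fpn_taboo_pn, !Rabs_pos_eq by (apply taboo_pn_nonneg || apply pn_nonneg; auto).
    apply taboo_pn_le_pn; auto.
Qed.
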